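(* Let $m$ and $k$ be positive integers with $k\leq m/2$, and let $H$ be $\mathrm{Alt}(m)$ or $\mathrm{Sym}(m)$ in its natural action on the set of $k$-element subsets of $\{1,\ldots,m\}$. If $H$ contains a permutation $g$ that has at most four cycles in this action, then either $k=3$ and $m=6$; or $k=2$ and $m\leq 9$; or $k=1$.
   Context: The number of cycles of a permutation is the number of orbits of the cyclic group it generates, fixed points included. *)

From mathcomp Require Import all_boot all_fingroup all_solvable.
Set Implicit Arguments. Unset Strict Implicit. Unset Printing Implicit Defensive.

(* The points are 'I_m = {0,...,m-1} (a relabelling of {1,...,m}). *)

Definition ksubsets (m k : nat) : {set {set 'I_m}} := [set A : {set 'I_m} | #|A| == k].

(* Number of cycles of g in its natural action on k-subsets:
   the number of orbits of the cyclic group <[g]> on the k-subsets,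
   fixed points included, for the induced set action 'P^*. *)
Definition ncycles_ksubsets (m k : nat) (g : {perm 'I_m}) : nat :=
  #|[set orbit ('P^*)%act <[g]> A | A in ksubsets m k]|.

From mathcomp Require Import all_boot all_fingroup all_solvable zify.
Set Implicit Arguments. Unset Strict Implicit. Unset Printing Implicit Defensive.

(* Decompose the points into the cycles of g.  If a g-invariant set is the
   disjoint union of invariant blocks of sizes l and s, the k-subsets meeting
   the first block in j points form a union of cycles of g, and intersecting
   with either block maps them, compatibly with g, onto the j-subsets of the
   first block and onto the (k - j)-subsets of the second; hence they contain
   at least as many cycles as either of these.  On a single cycle of length l
   every cycle on j-subsets has length at most l, so there are at least
   C(l, j) / l of them.  The explicit bound [ksub_bound n k], capped at 5,
   satisfies both recursions, and it is at most 4 only in the listed cases. *)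

Definition ksub_bound (n k : nat) : nat :=
  if n < k then 0 else if (k <= 1) || (n.-1 <= k) then 1
  else if (k == 2) || (k == n - 2) then minn 5 n./2
  else if n == 6 then 2 else 5.

Lemma ksub_bound_gt0 n k : k <= n -> 0 < ksub_bound n k.
Proof. by rewrite /ksub_bound => ?; do ![case: ifP => /= ?]; lia. Qed.

Lemma ksub_bound_le5 n k : ksub_bound n k <= 5.
Proof. by rewrite /ksub_bound; do ![case: ifP => /= ?]; lia. Qed.

Lemma ksub_bound_cap n k : 10 <= n -> 2 <= k -> k + 2 <= n -> ksub_bound n k = 5.
Proof. by rewrite /ksub_bound => *; do ![case: ifP => /= ?]; lia. Qed.

Definition split_sum (f1 f2 : nat -> nat) (l s k : nat) : nat :=
  \sum_(j < k.+1) if (j <= l) && (k - j <= s) then maxn (f1 j) (f2 (k - j)) else 0.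

Lemma split_sumE f1 f2 l s k :
  split_sum f1 f2 l s k =
  sumn [seq if (j <= l) && (k - j <= s) then maxn (f1 j) (f2 (k - j)) else 0
       | j <- iota 0 k.+1].
Proof. by rewrite sumnE big_map -[iota 0 k.+1]/(index_iota 0 k.+1) big_mkord. Qed.

Lemma leq_split_sum f1 f2 f1' f2' l s k :
  (forall j, f1 j <= f1' j) -> (forall j, f2 j <= f2' j) ->
  split_sum f1 f2 l s k <= split_sum f1' f2' l s k.
Proof.
move=> le_f1 le_f2; apply: leq_sum => j _; case: ifP => // _.
by rewrite geq_max !leq_max le_f1 le_f2 orbT.
Qed.

Lemma leq_split_sum_term f1 f2 l s k j : j <= k -> j <= l -> k - j <= s ->
  maxn (f1 j) (f2 (k - j)) <= split_sum f1 f2 l s k.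
Proof.
move=> jk jl kjs; have jk1 : j < k.+1 by [].
by rewrite /split_sum (bigD1 (Ordinal jk1)) //= jl kjs leq_addr.
Qed.

Lemma ksub_bound_split_small :
  all (fun l => all (fun s => all (fun k =>
      ksub_bound (l + s) k <= split_sum (ksub_bound l) (ksub_bound s) l s k)
    (iota 0 (l + s).+1)) (iota 1 19)) (iota 1 19).
Proof.
by under eq_all do under eq_all do under eq_all do rewrite split_sumE; vm_compute.
Qed.

(* Below 20 points this is the finite check above; from 20 on, one block has at
   least 10 points and a single term of the sum already reaches the cap. *)
Lemma ksub_bound_split l s k : 0 < l -> 0 < s ->
  ksub_bound (l + s) k <= split_sum (ksub_bound l) (ksub_bound s) l s k.
Proof.
move=> l_gt0 s_gt0.
have [sk|ks] := ltnP (l + s) k; first by rewrite /ksub_bound sk.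
have [small|large] := ltnP (l + s) 20.
  have l_in : l \in iota 1 19 by rewrite mem_iota; lia.
  have s_in : s \in iota 1 19 by rewrite mem_iota; lia.
  have k_in : k \in iota 0 (l + s).+1 by rewrite mem_iota.
  exact: allP (allP (allP ksub_bound_split_small l l_in) s s_in) k k_in.
have [edge|mid] := boolP ((k <= 1) || ((l + s).-1 <= k)).
  have -> : ksub_bound (l + s) k = 1 by rewrite /ksub_bound ltnNge ks edge.
  apply: leq_trans (leq_split_sum_term _ _ (j := k - s) _ _ _); try lia.
  by rewrite leq_max ksub_bound_gt0 //; lia.
apply: leq_trans (ksub_bound_le5 _ _) _.
have [l_big|s_big] := leqP 10 l.
  apply: leq_trans (leq_split_sum_term _ _ (j := maxn 2 (k - s)) _ _ _); try lia.
  by rewrite leq_max ksub_bound_cap //; lia.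
apply: leq_trans (leq_split_sum_term _ _ (j := k - maxn 2 (k - l)) _ _ _); try lia.
by rewrite leq_max (ksub_bound_cap (n := s)) ?orbT //; lia.
Qed.

Lemma leq_bin2r n a b : a <= b -> 2 * b <= n -> 'C(n, a) <= 'C(n, b).
Proof.
elim: b => [|b IHb]; first by rewrite leqn0 => /eqP ->.
rewrite leq_eqVlt => /predU1P[-> // | ab] bn.
apply: leq_trans (IHb ab _) _; first lia.
rewrite -(@leq_pmul2l b.+1) // -mul_bin_diag mul_bin_down leq_mul2r; lia.
Qed.

Lemma ksub_bound_cycle l j F : 0 < l -> j <= l -> 0 < F ->
  'C(l, j) <= l * F -> ksub_bound l j <= F.
Proof.
move=> l_gt0 jl F_gt0 binj.
have bin2E := mul_bin_diag l 1; rewrite bin1 in bin2E.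
have bin3E : l * (l.-1 * l.-2) = 6 * 'C(l, 3).
  by rewrite -[l.-2]bin1 mul_bin_diag mulnCA mul_bin_diag; lia.
rewrite /ksub_bound ltnNge jl /=; case: ifP => // edge.
case: ifP => [j2 | not_j2].
  have bin2F : 'C(l, 2) <= l * F.
    by case/orP: j2 => /eqP j2; move: binj; rewrite j2 // bin_sub //; lia.
  have : l.-1 <= 2 * F by rewrite -(@leq_pmul2l l) //; lia.
  lia.
have bin3F : 'C(l, 3) <= l * F.
  apply: leq_trans binj; have [jhalf|jhalf] := leqP (2 * j) l.
    by apply: leq_bin2r; lia.
  by rewrite -(bin_sub jl); apply: leq_bin2r; lia.
have : l.-1 * l.-2 <= 6 * F by rewrite -(@leq_pmul2l l) //; lia.
case: ifP => /eqP l6; nia.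
Qed.

Lemma ksub_bound_le4 m k : 0 < k -> 2 * k <= m -> ksub_bound m k <= 4 ->
  (k = 3 /\ m = 6) \/ (k = 2 /\ m <= 9) \/ k = 1.
Proof. by move=> ? ?; rewrite /ksub_bound; do ![case: ifP => /= ?]; lia. Qed.

Section CyclesOnSubsets.

Variables (m : nat) (g : {perm 'I_m}).

Local Notation G := <[g]>%g.
Local Notation to := ('P^*)%act.

Definition gcycles (S : {set {set 'I_m}}) := orbit to G @: S.

Definition ksubsets_in (D : {set 'I_m}) (k : nat) :=
  [set A : {set 'I_m} | A \subset D & #|A| == k].

Lemma card_gcyclesU (S1 S2 : {set {set 'I_m}}) :
  [acts G, on S2 | to] -> [disjoint S1 & S2] ->
  #|gcycles (S1 :|: S2)| = #|gcycles S1| + #|gcycles S2|.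
Proof.
move=> actS2 S12; rewrite /gcycles imsetU cardsU.
suff -> : orbit to G @: S1 :&: orbit to G @: S2 = set0 by rewrite cards0 subn0.
apply/setP=> O; rewrite !inE; apply/negbTE/andP=> -[/imsetP[A1 S1A1 ->]].
move=> /imsetP[A2 S2A2 eqO]; rewrite -(acts_sub_orbit _ actS2) in S2A2.
have S2A1 : A1 \in S2 by apply: (subsetP S2A2); rewrite -eqO orbit_refl.
by rewrite (disjointFr S12 S1A1) in S2A1.
Qed.

Lemma sum_card_gcycles_fibres (S : {set {set 'I_m}}) (phi : {set 'I_m} -> nat)
    (N : nat) :
  [acts G, on S | to] -> (forall A a, a \in G -> phi (to A a) = phi A) ->
  \sum_(j < N) #|gcycles [set A in S | phi A == j]| <= #|gcycles S|.
Proof.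
move=> actS phiG.
have acts_fibre j : [acts G, on [set A in S | phi A == j] | to].
  by apply/actsP=> a Ga A; rewrite !inE (acts_act actS) // phiG.
have -> : \sum_(j < N) #|gcycles [set A in S | phi A == j]|
          = #|gcycles [set A in S | phi A < N]|.
  elim: N => [|N IHN].
    rewrite big_ord0 /gcycles (_ : [set _ in S | _] = set0) ?imset0 ?cards0 //.
    by apply/setP=> A; rewrite !inE andbF.
  rewrite big_ord_recr /= IHN -card_gcyclesU.
  - rewrite (_ : _ :|: _ = [set A in S | phi A < N.+1]) //.
    apply/setP=> A; rewrite !inE ltnS [phi A <= N]leq_eqVlt.
    by case: (A \in S); rewrite //= orbC.
  - exact: acts_fibre.
  rewrite -setI_eq0; apply/eqP/setP=> A; rewrite !inE.
  by case: eqP => [->|_]; rewrite ?ltnn !andbF.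
by apply/subset_leq_card/imsetS/subsetP=> A; rewrite inE => /andP[].
Qed.

Lemma leq_card_gcycles_map (psi : {set 'I_m} -> {set 'I_m})
    (S T : {set {set 'I_m}}) :
  (forall A a, a \in G -> psi (to A a) = to (psi A) a) ->
  T \subset psi @: S -> #|gcycles T| <= #|gcycles S|.
Proof.
move=> psiG TS.
have orbit_psi A : orbit to G (psi A) = psi @: orbit to G A.
  by rewrite !orbitE -imset_comp; apply: eq_in_imset => a Ga /=; rewrite psiG.
apply: (@leq_trans #|[set psi @: O | O : {set {set 'I_m}} in gcycles S]|).
  2: exact: leq_imset_card.
apply/subset_leq_card/subsetP=> _ /imsetP[_ /(subsetP TS)/imsetP[A SA ->] ->].
by rewrite orbit_psi imset_f ?imset_f.
Qed.

Lemma card_orbit_le_period (A : {set 'I_m}) l :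
  0 < l -> to A (g ^+ l)%g = A -> #|orbit to G A| <= l.
Proof.
move=> l_gt0 fixA.
have fixAX q : to A (g ^+ l ^+ q)%g = A by apply/astab1P/groupX/astab1P.
apply: (@leq_trans #|[set to A (g ^+ i)%g | i : 'I_l]|).
  apply/subset_leq_card/subsetP=> _ /orbitP[_ /cycleP[i ->] <-].
  apply/imsetP; exists (Ordinal (ltn_pmod i l_gt0)) => //=.
  by rewrite {1}(divn_eq i l) expgD mulnC expgM actM fixAX.
by rewrite (leq_trans (leq_imset_card _ _)) ?card_ord.
Qed.

Lemma card_le_period_gcycles (S : {set {set 'I_m}}) l :
  [acts G, on S | to] -> 0 < l -> (forall A, A \in S -> to A (g ^+ l)%g = A) ->
  #|S| <= l * #|gcycles S|.
Proof.
move=> actS l_gt0 fixS; rewrite -(acts_sum_card_orbit actS) mulnC -sum_nat_const.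
by apply: leq_sum => _ /imsetP[A SA ->]; apply: card_orbit_le_period (fixS A SA).
Qed.

Lemma card_ksubsets_in (D : {set 'I_m}) k : #|ksubsets_in D k| = 'C(#|D|, k).
Proof. exact: cards_draws. Qed.

Lemma ksubsets_in_exists (D : {set 'I_m}) k :
  k <= #|D| -> exists A, A \in ksubsets_in D k.
Proof. by rewrite -bin_gt0 -card_ksubsets_in => /card_gt0P. Qed.

Lemma gcycles_ksubsets_in_gt0 (D : {set 'I_m}) k :
  k <= #|D| -> 0 < #|gcycles (ksubsets_in D k)|.
Proof. by rewrite card_gt0 imset_eq0 -card_gt0 card_ksubsets_in bin_gt0. Qed.

Lemma ksubsets_in_setU (E F B1 B2 : {set 'I_m}) j1 j2 : [disjoint E & F] ->
  B1 \in ksubsets_in E j1 -> B2 \in ksubsets_in F j2 ->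
  [/\ B1 :|: B2 \in ksubsets_in (E :|: F) (j1 + j2),
      (B1 :|: B2) :&: E = B1 & (B1 :|: B2) :&: F = B2].
Proof.
move=> EF; rewrite !inE => /andP[B1E /eqP <-] /andP[B2F /eqP <-].
have B12 : [disjoint B1 & B2] by apply: disjointWl B1E (disjointWr B2F EF).
rewrite setUSS // cardsU (disjoint_setI0 B12) cards0 subn0 eqxx !setIUl.
rewrite (setIidPl B1E) (setIidPl B2F) (disjoint_setI0 (disjointWl B1E EF)).
by rewrite (disjoint_setI0 (disjointWl B2F _)) 1?disjoint_sym // setU0 set0U.
Qed.

Lemma setactI_acts (E A : {set 'I_m}) a : [acts G, on E | 'P] -> a \in G ->
  to (A :&: E) a = to A a :&: E.
Proof.
move=> actE Ga; rewrite /= !setactE imsetI; last by move=> x y _ _; apply: act_inj.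
by congr (_ :&: _); rewrite -setactE astabs_setact //; apply: (subsetP actE).
Qed.

Lemma acts_ksubsets_in (D : {set 'I_m}) k :
  [acts G, on D | 'P] -> [acts G, on ksubsets_in D k | to].
Proof.
move=> actD; apply/actsP=> a Ga A.
rewrite !inE card_setact [to A a]setactE sub_imset_pre.
by rewrite (_ : _ @^-1: D = D) //; apply/setP=> y; rewrite inE (acts_act actD).
Qed.

Lemma acts_porbit x : [acts G, on porbit g x | 'P].
Proof. by rewrite porbitE; apply/acts_orbit/subsetT. Qed.

Lemma porbit_period x y : y \in porbit g x -> (g ^+ #|porbit g x|)%g y = y.
Proof. by rewrite -eq_porbit_mem => /eqP <-; rewrite permX iter_porbit. Qed.

Lemma ksub_bound_porbit x j :
  ksub_bound #|porbit g x| j <= #|gcycles (ksubsets_in (porbit g x) j)|.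
Proof.
set C := porbit g x; have C_gt0 : 0 < #|C| by rewrite lt0n card_porbit_neq0.
have [Cj|jC] := ltnP #|C| j; first by rewrite /ksub_bound Cj.
apply: ksub_bound_cycle => //; first exact: gcycles_ksubsets_in_gt0.
rewrite -card_ksubsets_in; apply: card_le_period_gcycles => //.
  exact/acts_ksubsets_in/acts_porbit.
move=> A; rewrite inE => /andP[AC _]; rewrite [to A _]setactE -[RHS]imset_id.
by apply: eq_in_imset => y Ay; apply: porbit_period (subsetP AC y Ay).
Qed.

Lemma split_sum_gcycles (D E : {set 'I_m}) k :
  [acts G, on D | 'P] -> [acts G, on E | 'P] -> E \subset D ->
  split_sum (fun j => #|gcycles (ksubsets_in E j)|)
            (fun j => #|gcycles (ksubsets_in (D :\: E) j)|) #|E| #|D :\: E| k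
  <= #|gcycles (ksubsets_in D k)|.
Proof.
move=> actD actE ED; set F := D :\: E.
have actF : [acts G, on F | 'P] by apply: actsD.
have EF : [disjoint E & F] by have /subsetDP[_] := subxx F; rewrite disjoint_sym.
have DEF : D = E :|: F by rewrite -{1}(setID D E) (setIidPr ED).
apply: leq_trans (sum_card_gcycles_fibres k.+1 (acts_ksubsets_in k actD)
                    (phi := fun A => #|A :&: E|) _); last first.
  by move=> A a Ga; rewrite -setactI_acts // card_setact.
apply: leq_sum => j _; case: ifP => // /andP[jE kjF].
have jk : j <= k by rewrite -ltnS.
rewrite geq_max; apply/andP; split.
- apply: (@leq_card_gcycles_map (fun A => A :&: E)) => [A a Ga|].
    by rewrite setactI_acts.
  apply/subsetP=> B EB; have [B' FB'] := ksubsets_in_exists kjF.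
  have [] := ksubsets_in_setU EF EB FB'; rewrite subnKC // -DEF => DA AE _.
  apply/imsetP; exists (B :|: B'); rewrite ?AE // inE DA AE.
  by move: EB; rewrite inE => /andP[].
- apply: (@leq_card_gcycles_map (fun A => A :&: F)) => [A a Ga|].
    by rewrite setactI_acts.
  apply/subsetP=> B FB; have [B' EB'] := ksubsets_in_exists jE.
  have [] := ksubsets_in_setU EF EB' FB; rewrite subnKC // -DEF => DA AE AF.
  apply/imsetP; exists (B' :|: B); rewrite ?AF // inE DA AE.
  by move: EB'; rewrite inE => /andP[].
Qed.

Lemma ksub_bound_gcycles (D : {set 'I_m}) k : [acts G, on D | 'P] ->
  ksub_bound #|D| k <= #|gcycles (ksubsets_in D k)|.
Proof.
have [n] := ubnP #|D|; elim: n => // n IHn in D k *; rewrite ltnS => Dn actD.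
have [-> | [x Dx]] := set_0Vmem D.
  by rewrite cards0; case: k => [|k] //; apply: gcycles_ksubsets_in_gt0.
set C := porbit g x.
have CD : C \subset D by rewrite /C porbitE (acts_sub_orbit _ actD).
have [<- | CneD] := eqVneq C D; first exact: ksub_bound_porbit.
have cardD : #|D| = #|C| + #|D :\: C| by rewrite -(cardsID C D) (setIidPr CD).
have C_gt0 : 0 < #|C| by rewrite lt0n card_porbit_neq0.
have DC_gt0 : 0 < #|D :\: C|.
  by rewrite card_gt0 setD_eq0; apply: contra CneD => DC; rewrite eqEsubset CD.
rewrite cardD; apply: leq_trans (ksub_bound_split k C_gt0 DC_gt0) _.
apply: leq_trans (split_sum_gcycles k actD (acts_porbit x) CD).
apply: leq_split_sum => j; first exact: ksub_bound_porbit.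
by apply: IHn; [lia | exact: actsD actD (acts_porbit x)].
Qed.

End CyclesOnSubsets.

Theorem proposition3p4 (m k : nat) (H : {set {perm 'I_m}}) (g : {perm 'I_m}) :
  0 < m -> 0 < k -> k <= m %/ 2 ->
  (H = Alt 'I_m \/ H = Sym 'I_m) ->
  g \in H -> ncycles_ksubsets k g <= 4 ->
  (k = 3 /\ m = 6) \/ (k = 2 /\ m <= 9) \/ k = 1.
Proof.
move=> _ k_gt0 k_le_half _ _ cycles_le4.
apply: ksub_bound_le4 => //; first lia.
apply: leq_trans cycles_le4.
rewrite /ncycles_ksubsets (_ : ksubsets m k = ksubsets_in [set: 'I_m] k); last first.
  by apply/setP=> A; rewrite !inE subsetT.
rewrite -[m in ksub_bound m]card_ord -cardsT.
by apply: ksub_bound_gcycles; apply/actsP=> a _ y; rewrite !inE.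
Qed.
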